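(* Let $0<p<1$ and let $\mu$ be a finite Borel measure on $S^{n-1}$ not concentrated in any closed hemisphere, and let $\mathfrak C_p(\mu)>0$ be a constant such that $\int_{S^{n-1}}(u\cdot v)_+^p\,d\mu(v)\ge\mathfrak C_p(\mu)$ for every $u\in S^{n-1}$. Let $\overline\mu_m$ be constructed as in the context. Then for all sufficiently large $m$, $$\int_{S^{n-1}}(u\cdot v)_+^p\,d\overline\mu_m(v)\ge\tfrac12\mathfrak C_p(\mu)\quad\text{for every }u\in S^{n-1}.$$
   Context: $(t)_+=\max\{t,0\}$; $|\nu|$ is total mass. Construction: for each positive integer $m$, $U_{1,m},\dots,U_{\mathcal N_m,m}$ is a partition of $S^{n-1}$ into Borel sets each of diameter less than $1/m$ and with nonempty interior relative to $S^{n-1}$, $v_{i,m}\in U_{i,m}$ are chosen in general position in dimension $n$, $\mu_m=\sum_{i=1}^{\mathcal N_m}(\mu(U_{i,m})+\mathcal N_m^{-2})\delta_{v_{i,m}}$ and $\overline\mu_m=\frac{|\mu|}{|\mu_m|}\mu_m$. *)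

From HB Require Import structures.
From mathcomp Require Import all_boot all_order all_algebra.
From mathcomp Require Import all_classical all_reals all_analysis.
Set Implicit Arguments. Unset Strict Implicit. Unset Printing Implicit Defensive.
Import Order.TTheory GRing.Theory Num.Theory.
Import numFieldNormedType.Exports.
Local Open Scope classical_set_scope.
Local Open Scope ring_scope.

(* Vectors of R^n are row vectors 'rV[R]_n; the Borel sigma-algebra is the one
   generated by the open sets of the (product = Euclidean) topology. *)
Definition BorelVec (R : realType) (n : nat) :=
  g_sigma_algebraType (@open 'rV[R]_n).

Definition dotv (R : realType) (n : nat) (u v : 'rV[R]_n) : R :=
  \sum_(i < n) u ord0 i * v ord0 i.

Definition enorm (R : realType) (n : nat) (x : 'rV[R]_n) : R :=
  Num.sqrt (dotv x x).

Definition sphere (R : realType) (n : nat) : set 'rV[R]_n :=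
  [set v | dotv v v = 1].
Arguments sphere {R} n.

Definition closed_hemisphere (R : realType) (n : nat) (u : 'rV[R]_n)
  : set 'rV[R]_n := [set v | sphere n v /\ 0 <= dotv u v].

Definition diam_lt (R : realType) (n : nat) (A : set 'rV[R]_n) (r : R) :=
  exists2 d : R, d < r & forall x y, A x -> A y -> enorm (x - y) <= d.

Definition rel_interior_nonempty (R : realType) (n : nat) (A : set 'rV[R]_n) :=
  exists x, exists2 e : R, 0 < e &
    [set y | sphere n y /\ enorm (y - x) < e] `<=` A.

Definition general_position (R : realType) (n N : nat) (v : 'I_N -> 'rV[R]_n) :=
  forall (k : nat) (f : 'I_k -> 'I_N), (k <= n)%N -> injective f ->
    row_free (\matrix_(j < k) v (f j)).

Definition pospow (R : realType) (t p : R) : R := (Num.max t 0) `^ p.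

(* weights of mu_m = sum_i (mu(U_i) + N^-2) delta_{v_i} *)
Definition disc_weight (R : realType) (n N : nat)
  (mu : set (BorelVec R n) -> \bar R) (U : 'I_N -> set (BorelVec R n))
  (i : 'I_N) : R :=
  fine (mu (U i)) + ((N%:R : R) ^+ 2)^-1.

(* integral of f against the normalized measure
   mubar_m = (|mu| / |mu_m|) mu_m, mu_m a finite sum of Dirac masses *)
Definition disc_integral (R : realType) (n N : nat)
  (mu : set (BorelVec R n) -> \bar R) (U : 'I_N -> set (BorelVec R n))
  (v : 'I_N -> 'rV[R]_n) (f : 'rV[R]_n -> R) : R :=
  (fine (mu setT) / \sum_(i < N) disc_weight mu U i) *
  \sum_(i < N) disc_weight mu U i * f (v i).

(* Hölder continuity of t |-> t_+^p (0 < p <= 1) compares the integral of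
   (u.w)_+^p over a cell of diameter < 1/m with its value at the node v_i up to
   m^-p, so the unnormalised discrete sum sum_i mu(U_i) (u.v_i)_+^p is at least
   C_p - m^-p |mu|.  Normalising by |mu_m| = sum_i mu(U_i) + 1/N_m loses at most
   the factor |mu| / (|mu| + 1/N_m), which is harmless once N_m >= 2/|mu|; for
   n >= 2 this holds for large m, since a cover of the sphere by sets of
   diameter < 1/m has at least m members.  On S^0 there are at most two cells,
   and the extra weight N_m^-2 at the node next to u pays for the normalisation,
   thanks to 2 C_p <= (1 + 2 m^-p) |mu| (add the bounds for u and -u). *)

From HB Require Import structures.
From mathcomp Require Import all_boot all_order all_algebra.
From mathcomp Require Import all_classical all_reals all_analysis.
From mathcomp Require Import ring lra measurable_realfun.
Import Order.TTheory GRing.Theory Num.Theory.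
Import numFieldNormedType.Exports.
Local Open Scope classical_set_scope.
Local Open Scope ring_scope.

Set Implicit Arguments. Unset Strict Implicit. Unset Printing Implicit Defensive.

Section IntegralCover.
Context d (T : measurableType d) (R : realType).
Variable mu : {measure set T -> \bar R}.

Lemma ge0_le_integral_setT (D : set T) (f g : T -> \bar R) :
  (forall x, D x -> (0 <= f x)%E) -> (forall x, (0 <= g x)%E) ->
  (forall x, D x -> (f x <= g x)%E) ->
  (\int[mu]_(x in D) f x <= \int[mu]_x g x)%E.
Proof.
move=> f0 g0 fg; rewrite ge0_integralE // ge0_integralE // patch_setT.
apply: ereal_sup_le => _ [h hf <-]; exists h => //= x.
apply: le_trans (hf x) _; rewrite /patch; case: ifP => [/set_mem|_]; first exact: fg.
exact: g0.
Qed.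

Lemma integral_sum_indic N (U : 'I_N -> set T) (c : 'I_N -> R) :
  (forall i, measurable (U i)) -> (forall i, 0 <= c i) ->
  (\int[mu]_x (\sum_(i < N) c i * \1_(U i) x)%:E =
   \sum_(i < N) (c i)%:E * mu (U i))%E.
Proof.
move=> mU c0; under eq_integral do rewrite -sumEFin.
rewrite ge0_integral_sum //; last first.
- by move=> i x _; rewrite lee_fin mulr_ge0.
- by move=> i; apply/measurable_EFinP/measurable_funM.
apply: eq_bigr => i _; rewrite (integralZl_indic _ (fun=> U i)) //.
  by rewrite integral_indic // setIT.
by move=> /lt_geF; rewrite c0.
Qed.

Lemma integral_le_sum_cover N (D : set T) (f : T -> R)
    (U : 'I_N -> set T) (c : 'I_N -> R) :
  (forall i, measurable (U i)) -> (forall i, 0 <= c i) ->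
  (forall x, D x -> 0 <= f x) -> (forall x, D x -> exists2 i, U i x & f x <= c i) ->
  (\int[mu]_(x in D) (f x)%:E <= \sum_(i < N) (c i)%:E * mu (U i))%E.
Proof.
move=> mU c0 f0 fc; rewrite -integral_sum_indic //.
have step_ge0 x : 0 <= \sum_(i < N) c i * \1_(U i) x.
  by apply: sumr_ge0 => i _; rewrite mulr_ge0.
apply: ge0_le_integral_setT => [x Dx|x|x Dx]; rewrite lee_fin ?f0 //.
have [i Uix fxc] := fc x Dx.
rewrite (bigD1 i) //= indicE mem_set // mulr1; apply: le_trans fxc _.
by rewrite lerDl; apply: sumr_ge0 => j _; rewrite mulr_ge0.
Qed.

Lemma sum_measure_le_setT N (U : 'I_N -> set T) :
  (forall i, measurable (U i)) -> (forall i j, i != j -> U i `&` U j = set0) ->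
  (\sum_(i < N) mu (U i) <= mu setT)%E.
Proof.
move=> mU disj; rewrite -(measure_bigsetU_ord mu xpredT mU).
  by apply: le_measure; rewrite ?inE //; exact: bigsetU_measurable.
move=> i j _ _ [x Uijx]; apply/eqP/negPn/negP => /disj Uij.
by move: Uijx; rewrite Uij.
Qed.

Lemma finite_measure_fineK (A : set T) : (mu setT < +oo)%E -> measurable A ->
  ((fine (mu A))%:E = mu A)%E.
Proof.
move=> muT mA; rewrite fineK // ge0_fin_numE //; apply: le_lt_trans muT.
by apply: le_measure; rewrite ?inE.
Qed.

End IntegralCover.

Section Dot.
Variables (R : realType) (n : nat).
Implicit Types u v x y : 'rV[R]_n.

Lemma dotvC u x : dotv u x = dotv x u.
Proof. by apply: eq_bigr => i _; rewrite mulrC. Qed.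

Lemma dotvNl u x : dotv (- u) x = - dotv u x.
Proof. by rewrite /dotv -sumrN; apply: eq_bigr => i _; rewrite !mxE mulNr. Qed.

Lemma dotvBr u x y : dotv u (x - y) = dotv u x - dotv u y.
Proof. by rewrite /dotv -sumrB; apply: eq_bigr => i _; rewrite !mxE mulrBr. Qed.

Lemma dotv_ge0 x : 0 <= dotv x x.
Proof. by apply: sumr_ge0 => i _; rewrite -expr2 sqr_ge0. Qed.

Lemma sphereN u : sphere n u -> sphere n (- u).
Proof. by rewrite /sphere /= dotvNl dotvC dotvNl opprK. Qed.

(* Cauchy-Schwarz for a unit vector: expand 0 <= |x - (u.x) u|^2. *)
Lemma sphere_dotv_le_enorm u x : sphere n u -> `|dotv u x| <= enorm x.
Proof.
move=> uu.
have expand t : \sum_(i < n) (x ord0 i - t * u ord0 i) ^+ 2 =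
    dotv x x - 2 * t * dotv u x + t ^+ 2 * dotv u u.
  by rewrite /dotv !mulr_sumr -sumrB -big_split /=; apply: eq_bigr => i _; ring.
have : 0 <= \sum_(i < n) (x ord0 i - dotv u x * u ord0 i) ^+ 2.
  by apply: sumr_ge0 => i _; exact: sqr_ge0.
rewrite expand uu mulr1 expr2 => ge0.
by rewrite /enorm -sqrtr_sqr ler_sqrt ?dotv_ge0 //; nra.
Qed.

Lemma sphere_dotv_le1 u v : sphere n u -> sphere n v -> `|dotv u v| <= 1.
Proof.
move=> su sv; apply: le_trans (sphere_dotv_le_enorm v su) _.
by rewrite /enorm sv sqrtr1.
Qed.

Lemma sphere_dotv_gt_half u v : sphere n u -> sphere n v ->
  enorm (u - v) < 1 -> 1 / 2 < dotv u v.
Proof.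
rewrite /sphere /enorm /= => uu vv.
have -> : dotv (u - v) (u - v) = dotv u u - 2 * dotv u v + dotv v v.
  by rewrite /dotv !mulr_sumr -sumrB -big_split /=; apply: eq_bigr => i _; rewrite !mxE; ring.
rewrite uu vv => lt1.
have : 1 - 2 * dotv u v + 1 < 1 by rewrite -(ltr_sqrt _ ltr01) sqrtr1.
lra.
Qed.

End Dot.

Section PosPow.
Variable R : realType.
Implicit Types a b t x y p : R.

Lemma pospow_ge0 t p : 0 <= pospow t p.
Proof. exact: powR_ge0. Qed.

Lemma powR_subadd x y p : 0 <= x -> 0 <= y -> 0 < p <= 1 ->
  (x + y) `^ p <= x `^ p + y `^ p.
Proof.
move=> x0 y0 /andP[p0 p1].
have [->|xn0] := eqVneq x 0; first by rewrite add0r powR0 ?gt_eqF // add0r.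
have [->|yn0] := eqVneq y 0; first by rewrite addr0 powR0 ?gt_eqF // addr0.
have xp : 0 < x by rewrite lt_def xn0.
have yp : 0 < y by rewrite lt_def yn0.
have sp : 0 < x + y by rewrite addr_gt0.
(* z / (x + y) <= (z / (x + y))^p, and the two ratios add up to 1 *)
have ratio z : 0 < z -> z <= x + y -> z / (x + y) * (x + y) `^ p <= z `^ p.
  move=> z0 zs; rewrite -[X in _ <= X `^ p](divfK (lt0r_neq0 sp) z).
  rewrite powRM ?divr_ge0 ?(ltW z0) ?(ltW sp) // ler_wpM2r ?powR_ge0 // ger1_powR //.
  by rewrite divr_gt0 //= ler_pdivrMr // mul1r.
apply: le_trans (lerD (ratio x xp _) (ratio y yp _)); rewrite ?lerDl ?lerDr //.
by rewrite -mulrDl -mulrDl divff ?gt_eqF // mul1r.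
Qed.

Lemma pospow_le_add_powR a b p : 0 < p <= 1 ->
  pospow a p <= pospow b p + `|a - b| `^ p.
Proof.
move=> hp; have p0 : 0 <= p by case/andP: hp => /ltW.
have hb : 0 <= Num.max b 0 by rewrite le_max lexx orbT.
apply: le_trans (powR_subadd hb (normr_ge0 (a - b)) hp).
apply: ge0_ler_powR; rewrite ?nnegrE ?addr_ge0 ?le_max ?lexx ?orbT //.
rewrite ge_max addr_ge0 // andbT.
have : a - b <= `|a - b| := ler_norm _.
have : b <= Num.max b 0 by rewrite le_max lexx.
lra.
Qed.

Lemma pospow_le1 t p : `|t| <= 1 -> 0 <= p -> pospow t p <= 1.
Proof.
move=> t1 p0; apply: (@le_trans _ _ (1 `^ p)); last by rewrite powR1.
apply: ge0_ler_powR; rewrite ?nnegrE ?ler01 ?le_max ?lexx ?orbT //.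
by rewrite ge_max ler01 andbT; apply: le_trans t1; exact: ler_norm.
Qed.

Lemma pospow_addN_le1 t p : `|t| <= 1 -> 0 < p ->
  pospow t p + pospow (- t) p <= 1.
Proof.
move=> t1 p0; have vanish s : s <= 0 -> pospow s p = 0.
  by move=> s0; rewrite /pospow max_r // powR0 // gt_eqF.
have [t0|t0] := leP t 0.
  by rewrite vanish // add0r; apply: pospow_le1; rewrite ?normrN // ltW.
rewrite (vanish (- t)) ?addr0; last by rewrite oppr_le0 ltW.
by apply: pospow_le1 => //; exact: ltW.
Qed.

Lemma pospow_ge_half t p : 1 / 2 < t <= 1 -> 0 < p <= 1 -> 1 / 2 <= pospow t p.
Proof.
move=> /andP[t12 t1] /andP[_ p1]; rewrite /pospow max_l; last lra.
by apply: le_trans (ger1_powR _ p1); rewrite ?t1 ?andbT; lra.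
Qed.

Lemma inv_nat_powR_small p e : 0 < p -> 0 < e ->
  exists2 M : nat, (0 < M)%N & forall m : nat, (M <= m)%N -> m%:R^-1 `^ p <= e.
Proof.
move=> p0 e0; set r := e `^ p^-1.
have r0 : 0 < r by rewrite powR_gt0.
have bound : r^-1 < (Num.Def.archi_bound r^-1)%:R.
  by apply: archi_boundP; rewrite invr_ge0 ltW.
exists (Num.Def.archi_bound r^-1).+1 => // m hm.
have m0 : 0 < m%:R :> R by rewrite ltr0n (leq_trans _ hm).
have mr : m%:R^-1 <= r.
  rewrite -[r]invrK lef_pV2 ?posrE ?invr_gt0 //.
  by apply/ltW/(lt_le_trans bound); rewrite ler_nat ltnW.
apply: (@le_trans _ _ (r `^ p)).
  by apply: ge0_ler_powR; rewrite ?nnegrE ?invr_ge0 ?ler0n // ltW.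
by rewrite /r -powRrM mulVf ?gt_eqF // powRr1 // ltW.
Qed.

End PosPow.

Section CoverCount.
Variable R : realType.

Lemma cell_points_inj (T : Type) N (U : 'I_N -> set T) (v : 'I_N -> T) :
  (forall i j, i != j -> U i `&` U j = set0) -> (forall i, U i (v i)) ->
  injective v.
Proof.
move=> disj vU i j vij; apply/eqP/negPn/negP => /disj Uij.
have : (U i `&` U j) (v i) by split; [|rewrite vij]; exact: vU.
by rewrite Uij.
Qed.

Lemma sphere1_card_le2 N (v : 'I_N -> 'rV[R]_1) :
  (forall i, sphere 1 (v i)) -> injective v -> (N <= 2)%N.
Proof.
move=> sv vinj; pose sg i := 0 < v i ord0 ord0.
suff sg_inj : injective sg by have := @leq_card _ _ sg sg_inj; rewrite card_ord card_bool.
move=> i j sg_ij; apply: vinj.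
have unit k : v k ord0 ord0 = 1 \/ v k ord0 ord0 = -1.
  have := sv k; rewrite /sphere /= /dotv big_ord1 -expr2 => /eqP.
  by rewrite sqrf_eq1 => /orP[] /eqP; [left | right].
apply/rowP => k; rewrite (ord1 k); move: sg_ij; rewrite /sg.
by case: (unit i) => ->; case: (unit j) => ->; rewrite ?ltr01 ?oppr_gt0 ?ltr10.
Qed.

Variable n : nat.

Definition arc_point (x : R) : 'rV[R]_n.+2 :=
  \row_j (if (j : nat) == 0%N then x
          else if (j : nat) == 1%N then Num.sqrt (1 - x ^+ 2) else 0).

Lemma arc_point_sphere (x : R) : 0 <= x <= 1 -> sphere n.+2 (arc_point x).
Proof.
move=> /andP[x0 x1]; rewrite /sphere /= /dotv 2!big_ord_recl big1 => [|i _]; last first.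
  by rewrite !mxE /= mul0r.
rewrite !mxE /= addr0 -!expr2 sqr_sqrtr; first ring.
by rewrite subr_ge0 -(expr1n _ 2%N) ler_pXn2r // ?nnegrE.
Qed.

Lemma arc_point_dist (x y : R) : `|x - y| <= enorm (arc_point x - arc_point y).
Proof.
rewrite /enorm -sqrtr_sqr ler_sqrt ?dotv_ge0 // /dotv big_ord_recl.
by rewrite !mxE /= -expr2 lerDl; apply: sumr_ge0 => i _; rewrite -expr2 sqr_ge0.
Qed.

(* The m points [arc_point (k / m)] are pairwise at distance >= 1/m, so no
   cell of diameter < 1/m contains two of them. *)
Lemma sphere_cover_card_ge N (W : 'I_N -> set 'rV[R]_n.+2) (m : nat) :
  (forall w, sphere n.+2 w -> exists i, W i w) ->
  (forall i, diam_lt (W i) m%:R^-1) -> (m <= N)%N.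
Proof.
move=> cover diam; rewrite -[m]card_ord -[N]card_ord.
pose x (k : 'I_m) : R := k%:R / m%:R.
have on_sphere (k : 'I_m) : sphere n.+2 (arc_point (x k)).
  have m0 : 0 < m%:R :> R by rewrite ltr0n (leq_ltn_trans _ (ltn_ord k)).
  apply: arc_point_sphere; rewrite /x divr_ge0 ?ler0n //= ler_pdivrMr // mul1r.
  by rewrite ler_nat; exact: ltnW.
have [f Wf] := boolp.choice (fun k => cover _ (on_sphere k)).
apply: (@leq_card _ _ f) => k l fkl; apply/val_inj/eqP/negPn/negP => kl.
have [dd dd_lt dd_ge] := diam (f k).
have sep : 1 <= `|k%:R - l%:R : R|.
  have [kl'|lk|eq_kl] := ltngtP k l; last by case: (negP kl); apply/eqP.
  - by rewrite distrC -(natrB _ (ltnW kl')) ger0_norm ?ler0n // ler1n subn_gt0.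
  - by rewrite -(natrB _ (ltnW lk)) ger0_norm ?ler0n // ler1n subn_gt0.
have far : m%:R^-1 <= `|x k - x l|.
  rewrite /x -mulrBl normrM [`|m%:R^-1|]ger0_norm ?invr_ge0 ?ler0n //.
  by rewrite -[X in X <= _]mul1r ler_wpM2r // invr_ge0 ler0n.
have near : enorm (arc_point (x k) - arc_point (x l)) <= dd.
  by apply: dd_ge; [exact: Wf | rewrite fkl; exact: Wf].
by have := le_trans far (le_trans (arc_point_dist _ _) near); rewrite leNgt dd_lt.
Qed.

End CoverCount.

Lemma sphere_partition_card (R : realType) n N (U : 'I_N -> set 'rV[R]_n)
    (v : 'I_N -> 'rV[R]_n) (m : nat) :
  (forall i, U i `<=` sphere n) -> (forall w, sphere n w -> exists i, U i w) ->
  (forall i j, i != j -> U i `&` U j = set0) ->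
  (forall i, diam_lt (U i) m%:R^-1) -> (forall i, U i (v i)) ->
  (N <= 2)%N \/ (m <= N)%N.
Proof.
move=> U_sphere U_cover U_disj U_diam vU.
case: n => [|[|n]] in U v U_sphere U_cover U_disj U_diam vU *; [left | left | right].
- case: (posnP N) => [-> // | N0].
  have := U_sphere _ _ (vU (Ordinal N0)); rewrite /sphere /= /dotv big_ord0.
  by move=> /esym/eqP; rewrite oner_eq0.
- exact: sphere1_card_le2 (fun i => U_sphere _ _ (vU i)) (cell_points_inj U_disj vU).
- exact: sphere_cover_card_ge U_cover U_diam.
Qed.

(* [A] = |mu|, [B] = total mass of the cells, [S] and [T] = weighted and
   unweighted sums of the integrand over the nodes, [d] = r^p, [q] = 1/N. *)
Lemma half_le_ratio (R : realFieldType) (A B S T Cp d q : R) :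
  0 <= B <= A -> Cp <= S + d * B -> 2 * Cp <= B + 2 * d * B -> 1 / 2 <= T ->
  0 <= d -> 4 * d * (A + 1) <= Cp -> 0 < q -> q <= A / 2 \/ 1 / 2 <= q <= 1 ->
  Cp / 2 <= A / (B + q) * (S + q ^+ 2 * T).
Proof.
move=> /andP[B0 BA] CpS Cp2 T12 d0 dCp q0 q_cases.
rewrite mulrAC ler_pdivlMr; last lra.
have A0 : 0 <= A by lra.
have Cp0 : 0 <= Cp by apply: le_trans dCp; rewrite !mulr_ge0 //; lra.
have dB : d * B <= d * A by rewrite ler_wpM2l.
have ASge : A * (Cp - d * A) <= A * S by rewrite ler_wpM2l //; lra.
have dA2 : d * A * A <= A * Cp / 4 by nra.
have qT : 0 <= q ^+ 2 * T by rewrite mulr_ge0 ?sqr_ge0 //; lra.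
suff : Cp * q / 2 <= A * Cp / 4 + A * (q ^+ 2 * T).
  have : Cp * B / 2 <= Cp * A / 2 by nra.
  nra.
case: q_cases => [qA|/andP[q12 q1]].
  have : Cp * q <= Cp * (A / 2) by rewrite ler_wpM2l.
  have : 0 <= A * (q ^+ 2 * T) by rewrite mulr_ge0.
  lra.
have CpA : Cp * q <= (A / 2 + d * A) * q by rewrite ler_wpM2r; lra.
have dAq : d * A * q <= d * A by rewrite ler_piMr ?mulr_ge0.
have dA : d * A <= Cp * A / 4 by nra.
have : A * (q / 4) <= A * (q ^+ 2 * T).
  by rewrite ler_wpM2l // expr2; nra.
nra.
Qed.

Lemma disc_integralE (R : realType) (n N : nat) (mu : set (BorelVec R n) -> \bar R)
    (U : 'I_N -> set (BorelVec R n)) (v : 'I_N -> 'rV[R]_n) (f : 'rV[R]_n -> R) :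
  disc_integral mu U v f =
  fine (mu setT) / (\sum_(i < N) fine (mu (U i)) + N%:R^-1) *
  (\sum_(i < N) fine (mu (U i)) * f (v i) + N%:R^-1 ^+ 2 * \sum_(i < N) f (v i)).
Proof.
rewrite /disc_integral /disc_weight big_split /= sumr_const card_ord exprVn.
congr (_ / (_ + _) * _).
  have [->|N0] := eqVneq N 0%N; first by rewrite mulr0n invr0.
  by rewrite -mulr_natr; field; rewrite pnatr_eq0.
by rewrite mulr_sumr -big_split /=; apply: eq_bigr => i _; rewrite mulrDl.
Qed.

Section Discretization.
Variables (R : realType) (n : nat) (mu : {measure set (BorelVec R n) -> \bar R}).
Hypothesis mu_fin : (mu setT < +oo)%E.
Variable p : R.
Hypothesis p01 : 0 < p <= 1.

Let A := fine (mu setT).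

Lemma integral_pospow_le_mass u : sphere n u ->
  (\int[mu]_(w in sphere n) (pospow (dotv u w) p)%:E <= mu setT)%E.
Proof.
move=> su; rewrite -[mu setT]mul1e -integral_cst //.
apply: ge0_le_integral_setT => [w _|w|w sw]; rewrite /= ?lee_fin ?pospow_ge0 ?ler01 //.
by rewrite pospow_le1 ?sphere_dotv_le1 //; case/andP: p01 => /ltW.
Qed.

Variables (N : nat) (U : 'I_N -> set (BorelVec R n)) (v : 'I_N -> 'rV[R]_n) (r : R).
Hypotheses (U_meas : forall i, measurable (U i)) (U_sphere : forall i, U i `<=` sphere n).
Hypothesis U_cover : forall w, sphere n w -> exists i, U i w.
Hypothesis U_disj : forall i j, i != j -> U i `&` U j = set0.
Hypotheses (U_diam : forall i, diam_lt (U i) r) (vU : forall i, U i (v i)).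

Let B := \sum_(i < N) fine (mu (U i)).
Let S u := \sum_(i < N) fine (mu (U i)) * pospow (dotv u (v i)) p.

Let fineK_cell i : (fine (mu (U i)))%:E = mu (U i).
Proof. exact: finite_measure_fineK. Qed.

Lemma cell_mass_le : B <= A.
Proof.
rewrite -lee_fin -sumEFin finite_measure_fineK //.
under eq_bigr do rewrite fineK_cell.
exact: sum_measure_le_setT.
Qed.

Lemma cell_mass_ge0 : 0 <= B.
Proof. by apply: sumr_ge0 => i _; apply: fine_ge0. Qed.

Lemma integral_pospow_le_cells u : sphere n u ->
  (\int[mu]_(w in sphere n) (pospow (dotv u w) p)%:E <= (S u + r `^ p * B)%:E)%E.
Proof.
move=> su; have p0 : 0 <= p by case/andP: p01 => /ltW.
have -> : S u + r `^ p * B =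
    \sum_(i < N) (pospow (dotv u (v i)) p + r `^ p) * fine (mu (U i)).
  by rewrite /S /B mulr_sumr -big_split; apply: eq_bigr => i _ /=; ring.
rewrite -sumEFin; under eq_bigr do rewrite EFinM fineK_cell.
apply: integral_le_sum_cover => // [i|w _|w sw]; rewrite ?addr_ge0 ?pospow_ge0 ?powR_ge0 //.
have [i Uiw] := U_cover sw; exists i => //.
apply: le_trans (pospow_le_add_powR _ (dotv u (v i)) p01) _; rewrite lerD2l.
have [dd dd_lt dd_ge] := U_diam i.
have dist : `|dotv u w - dotv u (v i)| <= r.
  rewrite -dotvBr; apply: le_trans (sphere_dotv_le_enorm _ su) _.
  exact/ltW/(le_lt_trans (dd_ge _ _ Uiw (vU i))).
by apply: ge0_ler_powR; rewrite ?nnegrE // (le_trans _ dist).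
Qed.

Lemma cells_pospow_addN u : sphere n u -> S u + S (- u) <= B.
Proof.
move=> su; rewrite /S -big_split /=; apply: ler_sum => i _.
rewrite -mulrDr ler_piMr ?fine_ge0 // dotvNl.
by apply: pospow_addN_le1; [exact: sphere_dotv_le1 (U_sphere (vU i)) | case/andP: p01].
Qed.

Lemma half_le_sum_pospow u : r <= 1 -> sphere n u ->
  1 / 2 <= \sum_(i < N) pospow (dotv u (v i)) p.
Proof.
move=> r1 su; have [j Uju] := U_cover su.
have sv := U_sphere (vU j).
have [dd dd_lt dd_ge] := U_diam j.
have near : enorm (u - v j) < 1 by apply: le_lt_trans (dd_ge _ _ Uju (vU j)) _; lra.
have le1 : dotv u (v j) <= 1 by have := sphere_dotv_le1 su sv; rewrite ler_norml => /andP[].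
apply: le_trans (@pospow_ge_half _ (dotv u (v j)) p _ p01) _.
  by rewrite le1 andbT; exact: sphere_dotv_gt_half.
rewrite (bigD1 j) //= lerDl; apply: sumr_ge0 => i _; exact: pospow_ge0.
Qed.

Lemma half_le_disc_integral Cp :
  (forall u, sphere n u ->
     (Cp%:E <= \int[mu]_(w in sphere n) (pospow (dotv u w) p)%:E)%E) ->
  4 * r `^ p * (A + 1) <= Cp -> r <= 1 -> (N <= 2)%N \/ 2 <= A * N%:R ->
  forall u, sphere n u ->
    Cp / 2 <= disc_integral mu U v (fun w => pospow (dotv u w) p).
Proof.
move=> Cp_le small r1 N_cases u su.
have Cp_cells w : sphere n w -> Cp <= S w + r `^ p * B.
  by move=> sw; rewrite -lee_fin; apply: le_trans (Cp_le _ sw) (integral_pospow_le_cells sw).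
have N0 : 0 < N%:R :> R.
  by have [i _] := U_cover su; rewrite ltr0n (leq_ltn_trans _ (ltn_ord i)).
have NV : N%:R^-1 * N%:R = 1 :> R by rewrite mulVf ?gt_eqF.
rewrite disc_integralE.
apply: (half_le_ratio _ (Cp_cells _ su) _ (half_le_sum_pospow r1 su) (powR_ge0 _ _) small).
- by rewrite cell_mass_ge0 cell_mass_le.
- have := cells_pospow_addN su; have := Cp_cells _ su; have := Cp_cells _ (sphereN su).
  lra.
- by rewrite invr_gt0.
case: N_cases => [N2|AN]; [right|left; nra].
rewrite invf_le1 ?ler1n // -(ltr0n R) N0 andbT.
have : 2^-1 <= N%:R^-1 :> R by rewrite lef_pV2 ?posrE // ler_nat.
lra.
Qed.

End Discretization.

Theorem lemma5p5 (R : realType) (n : nat) (p : R)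
  (mu : {measure set (BorelVec R n) -> \bar R}) (Cp : R)
  (N : nat -> nat) (U : forall m : nat, 'I_(N m) -> set (BorelVec R n))
  (v : forall m : nat, 'I_(N m) -> 'rV[R]_n) :
  0 < p < 1 ->
  (mu setT < +oo)%E ->
  mu (~` sphere n) = 0%E ->
  (forall u : 'rV[R]_n, sphere n u -> mu (~` closed_hemisphere u) <> 0%E) ->
  0 < Cp ->
  (forall u : 'rV[R]_n, sphere n u ->
     (\int[mu]_(w in sphere n) (pospow (dotv u w) p)%:E >= Cp%:E)%E) ->
  (forall m : nat, (0 < m)%N -> forall i, measurable (U m i)) ->
  (forall m : nat, (0 < m)%N -> forall i, U m i `<=` sphere n) ->
  (forall m : nat, (0 < m)%N -> forall w, sphere n w -> exists i, U m i w) ->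
  (forall m : nat, (0 < m)%N -> forall i j, i != j -> U m i `&` U m j = set0) ->
  (forall m : nat, (0 < m)%N -> forall i, diam_lt (U m i) (m%:R)^-1) ->
  (forall m : nat, (0 < m)%N -> forall i, rel_interior_nonempty (U m i)) ->
  (forall m : nat, (0 < m)%N -> forall i, U m i (v m i)) ->
  (forall m : nat, (0 < m)%N -> general_position (v m)) ->
  exists M : nat, forall m : nat, (M <= m)%N ->
    forall u : 'rV[R]_n, sphere n u ->
      disc_integral mu (U m) (v m) (fun w => pospow (dotv u w) p) >= Cp / 2.
Proof.
move=> /andP[p0 p1] mu_fin _ _ Cp0 Cp_le U_meas U_sphere U_cover U_disj U_diam _ vU _.
have p01 : 0 < p <= 1 by rewrite p0 ltW.
set A := fine (mu setT); have A0 : 0 <= A by apply: fine_ge0.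
have [M0 M0_gt0 small] : exists2 M0 : nat, (0 < M0)%N &
    forall m, (M0 <= m)%N -> m%:R^-1 `^ p <= Cp / (4 * (A + 1)).
  by apply: inv_nat_powR_small p0 _; rewrite divr_gt0 //; lra.
have K_gt := archi_boundP (divr_ge0 (ler0n R 2) A0).
exists (maxn M0 (Num.Def.archi_bound (2 / A))) => m; rewrite geq_max => /andP[M0m Km] u su.
have m0 := leq_trans M0_gt0 M0m.
have A_gt0 : 0 < A.
  apply: lt_le_trans Cp0 _; rewrite -lee_fin -/A finite_measure_fineK //.
  exact: le_trans (Cp_le _ su) (integral_pospow_le_mass mu p01 su).
apply: (half_le_disc_integral mu_fin p01 (U_meas m m0) (U_sphere m m0) (U_cover m m0)
  (U_disj m m0) (U_diam m m0) (vU m m0) Cp_le) => //.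
- by have := small m M0m; rewrite -/A ler_pdivlMr; lra.
- by rewrite invf_le1 ?ler1n // ltr0n.
have [|mN] := sphere_partition_card (U_sphere m m0) (U_cover m m0) (U_disj m m0)
  (U_diam m m0) (vU m m0); [by left | right; rewrite -/A].
have : 2 / A <= (N m)%:R.
  by apply/ltW/(lt_le_trans K_gt); rewrite ler_nat (leq_trans Km).
have : A * (2 / A) = 2 by rewrite mulrC divfK ?gt_eqF.
nra.
Qed.
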